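(* Let $H$ be a triangle-free simple graph and $k\ge1$. Then $\nu(I_k \vee H) = \alpha'_k(H)$ and $\tau(I_k \vee H) = k|V(H)| - \phi_k(H)$.
   Context: $I_k$ is an independent set of $k$ vertices; the join $G_1\vee G_2$ is obtained from the disjoint union of $G_1,G_2$ by adding all edges between $V(G_1)$ and $V(G_2)$. For a graph $G$, $\tau(G)$ is the minimum size of an edge set $X$ with $G-X$ triangle-free, and $\nu(G)$ is the maximum number of pairwise edge-disjoint triangles in $G$. $\alpha'_k(G)$ is the maximum number of edges of a $k$-edge-colorable subgraph of $G$. For $D\subseteq V(G)$, $\phi_k(D)=k|D|-|E(G[D])|$ and $\phi_k(G)=\max_{D\subseteq V(G)}\phi_k(D)$. *)

(* Simple graphs on a finType V given by a symmetric,
   irreflexive relation r : rel V. Edges are 2-element vertex sets. *)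
From HB Require Import structures.
From mathcomp Require Import all_boot all_order all_algebra.
Set Implicit Arguments. Unset Strict Implicit. Unset Printing Implicit Defensive.
Import Order.TTheory GRing.Theory Num.Theory.

Section Graphs.
Variable V : finType.
Implicit Types (r : rel V) (F : {set {set V}}).

Definition edges r : {set {set V}} :=
  [set E : {set V} | [exists x : V, exists y : V, r x y && (E == [set x; y])]].

Definition is_triangle F (t : {set V}) : bool :=
  (#|t| == 3) &&
  [forall x in t, forall y in t, (x != y) ==> ([set x; y] \in F)].

Definition triangle_freeE F : bool := [forall t : {set V}, ~~ is_triangle F t].

Definition tri_edges F (t : {set V}) : {set {set V}} := [set E in F | E \subset t].

Definition tau r : nat :=
  \big[minn/#|edges r|]_(X : {set {set V}} |
      (X \subset edges r) && triangle_freeE (edges r :\: X)) #|X|.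

Definition tri_packing r (P : {set {set V}}) : bool :=
  [forall t in P, is_triangle (edges r) t] &&
  [forall t1 in P, forall t2 in P,
     (t1 != t2) ==> [disjoint tri_edges (edges r) t1 & tri_edges (edges r) t2]].

Definition nu r : nat :=
  \max_(P : {set {set V}} | tri_packing r P) #|P|.

Definition k_edge_colorable (k : nat) F : bool :=
  [exists c : {ffun {set V} -> 'I_k},
     [forall E1 in F, forall E2 in F,
        ((E1 != E2) && (E1 :&: E2 != set0)) ==> (c E1 != c E2)]].

Definition alpha'_ (k : nat) r : nat :=
  \max_(F : {set {set V}} | (F \subset edges r) && k_edge_colorable k F) #|F|.

Definition induced_edges r (D : {set V}) : {set {set V}} :=
  [set E in edges r | E \subset D].

Definition phi_set (k : nat) r (D : {set V}) : int :=
  (k * #|D|)%:Z - (#|induced_edges r D|)%:Z.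

(* phi_k(G) = max_D phi_k(D); the empty set gives 0, so starting the
   fold at 0 does not change the value *)
Definition phi_ (k : nat) r : int :=
  \big[Num.max/0%R]_(D : {set V}) phi_set k r D.

End Graphs.

Definition join_Ik (k : nat) (T : finType) (r : rel T) : rel ('I_k + T)%type :=
  fun x y => match x, y with
             | inl _, inl _ => false
             | inl _, inr _ => true
             | inr _, inl _ => true
             | inr a, inr b => r a b
             end.
Arguments join_Ik k {T} r.

(* Since I_k is independent and H is triangle-free, every triangle of
   I_k \/ H is an apex a in I_k together with an edge E of H, and two such
   triangles share an edge iff they have the same base, or the same apex and
   intersecting bases.  So triangle packings are exactly edge sets of H
   properly coloured by their apexes, which gives nu = alpha'_k.
   For tau: deleting the apex edges to V(H) \ D and the edges of H[D] kills
   every triangle, at cost k|V(H) \ D| + e(H[D]) = k|V(H)| - phi_k(D).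
   Conversely, given a triangle cover X, pick the apex a with the fewest
   edges in X, and let D be the vertices of H not joined to a by an edge of
   X: X has at least k|V(H) \ D| apex edges, and it must contain every edge
   of H[D], else a triangle with apex a survives. *)
From HB Require Import structures.
From mathcomp Require Import all_boot all_order all_algebra.
Set Implicit Arguments. Unset Strict Implicit. Unset Printing Implicit Defensive.
Import Order.TTheory GRing.Theory Num.Theory.

Lemma card_dep_pairs (I J : finType) (S : I -> {set J}) :
  #|[set p : I * J | p.2 \in S p.1]| = \sum_i #|S i|.
Proof.
rewrite -sum1_card; under [RHS]eq_bigr => i _ do rewrite -sum1_card.
by rewrite pair_big_dep; apply: eq_bigl => p; rewrite inE.
Qed.

Section Graphs.
Variable V : finType.
Implicit Types (g : rel V) (F P X : {set {set V}}) (t D E : {set V}).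

Lemma set3P (x a b c : V) : reflect [\/ x = a, x = b | x = c] (x \in [set a; b; c]).
Proof.
rewrite !inE -orbA.
by apply: (iffP or3P) => -[] /eqP ?; by [constructor 1|constructor 2|constructor 3].
Qed.

Lemma cards3 (x y z : V) : x != y -> y != z -> z != x -> #|[set x; y; z]| = 3.
Proof.
move=> xy yz zx; rewrite -setUA cardsU1 cardsU1 cards1 !inE.
by rewrite (negbTE xy) eq_sym (negbTE zx) (negbTE yz).
Qed.

Lemma edgesP g E : reflect (exists x y, g x y /\ E = [set x; y]) (E \in edges g).
Proof.
rewrite inE; apply: (iffP existsP) => [[x /existsP[y /andP[gxy /eqP->]]]|[x [y [gxy ->]]]].
  by exists x, y.
by exists x; apply/existsP; exists y; rewrite gxy eqxx.
Qed.

Lemma mem_edges2 g x y : symmetric g -> ([set x; y] \in edges g) = g x y.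
Proof.
move=> g_sym; apply/edgesP/idP => [[x' [y' [gxy' exy]]]|]; last by exists x, y.
have [xE yE] : x \in [set x'; y'] /\ y \in [set x'; y'] by rewrite -exy set21 set22.
have [x'E y'E] : x' \in [set x; y] /\ y' \in [set x; y] by rewrite exy set21 set22.
move: xE yE x'E y'E => /set2P[]-> /set2P[]-> /set2P[] ex' /set2P[] ey'; subst.
all: by rewrite // g_sym.
Qed.

Lemma edge_eq2 g E x y : irreflexive g -> E \in edges g ->
  x \in E -> y \in E -> x != y -> E = [set x; y].
Proof.
move=> g_irr /edgesP[u [v [guv ->]]] xE yE nxy.
have nuv : u != v by apply: contraTneq guv => ->; rewrite g_irr.
by apply/eqP; rewrite eq_sym eqEcard subUset !sub1set xE yE !cards2 nxy nuv.
Qed.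

Lemma induced_edges0 g : induced_edges g set0 = set0.
Proof.
apply/setP => E; rewrite /induced_edges in_set in_set0.
apply/negP => /andP[/edgesP[x [y [_ ->]]]].
by rewrite subset0 -cards_eq0 cards2.
Qed.

Lemma is_triangle_edge F t x y :
  is_triangle F t -> x \in t -> y \in t -> x != y -> [set x; y] \in F.
Proof.
by case/andP=> _ /forall_inP/[apply]/forall_inP/[apply]/implyP.
Qed.

Lemma is_triangleS F1 F2 t : F1 \subset F2 -> is_triangle F1 t -> is_triangle F2 t.
Proof.
move=> sF /[dup] tri /andP[ct _]; rewrite /is_triangle ct.
apply/forall_inP => x xt; apply/forall_inP => y yt.
by apply/implyP => nxy; rewrite (subsetP sF) // (is_triangle_edge tri).
Qed.

Lemma is_triangleD F X t : is_triangle F t ->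
  {in t &, forall x y, x != y -> [set x; y] \notin X} -> is_triangle (F :\: X) t.
Proof.
move=> /[dup] tri /andP[ct _] tX; rewrite /is_triangle ct.
apply/forall_inP => x xt; apply/forall_inP => y yt.
by apply/implyP => nxy; rewrite in_setD tX // (is_triangle_edge tri).
Qed.

Lemma triangle_freeE0 : triangle_freeE (set0 : {set {set V}}).
Proof.
apply/forallP => t; apply/negP => tri; have /andP[/eqP ct _] := tri.
have /card_gt1P[x [y [xt yt nxy]]] : 1 < #|t| by rewrite ct.
by have := is_triangle_edge tri xt yt nxy; rewrite inE.
Qed.

Lemma is_triangleP g t : symmetric g ->
  reflect (#|t| = 3 /\ {in t &, forall x y, x != y -> g x y}) (is_triangle (edges g) t).
Proof.
move=> g_sym; apply: (iffP idP) => [tri|[ct tg]].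
  split; first by case/andP: tri => /eqP.
  by move=> x y xt yt nxy; rewrite -mem_edges2 // (is_triangle_edge tri).
rewrite /is_triangle ct eqxx; apply/forall_inP => x xt; apply/forall_inP => y yt.
by apply/implyP => nxy; rewrite mem_edges2 // tg.
Qed.

Lemma tri_edges_meetP F t1 t2 :
  reflect (exists2 e, e \in F & e \subset t1 :&: t2)
          (~~ [disjoint tri_edges F t1 & tri_edges F t2]).
Proof.
rewrite -setI_eq0; apply: (iffP (set0Pn _)) => [[e]|[e eF]].
  by rewrite !inE => /and3P[/andP[eF e1] _ e2]; exists e; rewrite // subsetI e1.
by rewrite subsetI => /andP[e1 e2]; exists e; rewrite !inE eF e1 e2.
Qed.

Lemma tri_packingP g P :
  reflect ({in P, forall t, is_triangle (edges g) t} /\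
           {in P &, forall t1 t2, t1 != t2 ->
              [disjoint tri_edges (edges g) t1 & tri_edges (edges g) t2]})
          (tri_packing g P).
Proof.
apply: (iffP andP) => -[Ptri Pdis]; split.
- exact/forall_inP.
- by move=> t1 t2 t1P t2P; move/forall_inP/(_ t1 t1P)/forall_inP/(_ t2 t2P)/implyP: Pdis.
- exact/forall_inP.
- apply/forall_inP => t1 t1P; apply/forall_inP => t2 t2P; apply/implyP; exact: Pdis.
Qed.

Lemma tri_packing_meet g P t1 t2 : tri_packing g P -> t1 \in P -> t2 \in P ->
  (exists2 e, e \in edges g & e \subset t1 :&: t2) -> t1 = t2.
Proof.
case/tri_packingP=> _ Pdis t1P t2P /tri_edges_meetP.
by apply: contraNeq; exact: Pdis.
Qed.

Lemma k_edge_colorableP k F :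
  reflect (exists c : {ffun {set V} -> 'I_k},
             {in F &, forall E1 E2, E1 != E2 -> E1 :&: E2 != set0 -> c E1 != c E2})
          (k_edge_colorable k F).
Proof.
apply: (iffP existsP) => -[c hc]; exists c.
  move=> E1 E2 E1F E2F nE meet.
  by move/forall_inP/(_ E1 E1F)/forall_inP/(_ E2 E2F)/implyP: hc; apply; rewrite nE.
apply/forall_inP => E1 E1F; apply/forall_inP => E2 E2F.
by apply/implyP => /andP[]; exact: hc.
Qed.

Lemma phi_setE k g D :
  phi_set k g D = (Posz (k * #|V|) - Posz (k * #|~: D| + #|induced_edges g D|))%R.
Proof.
rewrite /phi_set -(cardsC D) mulnDr !PoszD.
by rewrite opprD addrA addrK.
Qed.

End Graphs.

Section Join.
Variables (T : finType) (r : rel T) (k : nat).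
Hypotheses (r_sym : symmetric r) (r_irr : irreflexive r)
  (H_tf : triangle_freeE (edges r)) (k_pos : 0 < k).

Local Notation W := ('I_k + T)%type.
Local Notation j := (join_Ik k r).

Lemma join_sym : symmetric j.
Proof. by case=> [a|u] [b|v] //=; rewrite r_sym. Qed.

Definition apex_tri (a : 'I_k) (E : {set T}) : {set W} := inl a |: (inr @: E).

Definition base (t : {set W}) : {set T} := inr @^-1: t.

Lemma inl_apex_tri a b E : (inl b \in apex_tri a E) = (b == a).
Proof. by rewrite !inE orbC; case: imsetP => // -[]. Qed.

Lemma inr_apex_tri a w E : (inr w \in apex_tri a E) = (w \in E).
Proof. by rewrite !inE (mem_imset _ _ (@inr_inj _ _)). Qed.

Lemma base_apex_tri a E : base (apex_tri a E) = E.
Proof. by apply/setP => w; rewrite inE inr_apex_tri. Qed.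

Lemma apex_tri2 a u v : apex_tri a [set u; v] = [set inl a; inr u; inr v].
Proof. by rewrite /apex_tri imsetU1 imset_set1 setUA. Qed.

Lemma join_triangleP t :
  reflect (exists a E, E \in edges r /\ t = apex_tri a E) (is_triangle (edges j) t).
Proof.
apply: (iffP (is_triangleP _ join_sym)) => [[ct tj]|[a [E [/edgesP[u [v [ruv ->]]] ->]]]];
    last first.
  have nuv : u != v by apply: contraTneq ruv => ->; rewrite r_irr.
  rewrite apex_tri2; split; first by rewrite cards3 // eq_sym.
  by move=> x y /set3P[]-> /set3P[]->; rewrite ?eqxx //= r_sym.
have /card_gt2P[x [y [z [[xt yt zt] [nxy nyz nzx]]]]] : 2 < #|t| by rewrite ct.
have -> : t = [set x; y; z].
  apply/eqP; rewrite eq_sym eqEcard ct cards3 // leqnn andbT.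
  by apply/subsetP => w /set3P[]->.
have := tj _ _ xt yt nxy; have := tj _ _ yt zt nyz; have := tj _ _ zt xt nzx.
move: nxy nyz nzx {xt yt zt tj}.
case: x => [a|u]; case: y => [b|v]; case: z => [c|w] //= nxy nyz nzx rwu rvw ruv.
- by exists a, [set v; w]; rewrite mem_edges2 // apex_tri2.
- by exists b, [set u; w]; rewrite mem_edges2 // r_sym apex_tri2 (setUC [set inr u]).
- by exists c, [set u; v]; rewrite mem_edges2 // apex_tri2 [LHS]setUC setUA.
- case/negP: (forallP H_tf [set u; v; w]); apply/is_triangleP => //; split.
    by rewrite cards3 //; apply: contraNneq nxy => ->.
  by move=> p q /set3P[]-> /set3P[]->; rewrite ?eqxx // r_sym.
Qed.

Lemma apex_tri_meet a1 a2 E1 E2 : E1 \in edges r -> E2 \in edges r ->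
  (exists2 e, e \in edges j & e \subset apex_tri a1 E1 :&: apex_tri a2 E2) <->
  E1 = E2 \/ a1 = a2 /\ E1 :&: E2 != set0.
Proof.
move=> E1r E2r; split => [[_ /edgesP[x [y [jxy ->]]]]|].
  rewrite subsetI !subUset !sub1set => /andP[/andP[x1 y1] /andP[x2 y2]].
  move: jxy x1 y1 x2 y2; case: x => [a|u]; case: y => [b|v] //= ruv;
    rewrite ?inl_apex_tri ?inr_apex_tri.
  - by move=> /eqP<- v1 /eqP<- v2; right; split => //; apply/set0Pn; exists v; rewrite inE v1 v2.
  - by move=> u1 /eqP<- u2 /eqP<-; right; split => //; apply/set0Pn; exists u; rewrite inE u1 u2.
  - move=> u1 v1 u2 v2; left; have nuv : u != v by apply: contraTneq ruv => ->; rewrite r_irr.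
    by rewrite (edge_eq2 r_irr E1r u1 v1 nuv) (edge_eq2 r_irr E2r u2 v2 nuv).
case=> [<-|[<- /set0Pn[w]]].
  exists (inr @: E1); last by rewrite subsetI !subsetUr.
  by case/edgesP: E1r => u [v [ruv ->]]; rewrite imsetU1 imset_set1 (mem_edges2 _ _ join_sym).
rewrite inE => /andP[w1 w2]; exists [set inl a1; inr w]; first by rewrite (mem_edges2 _ _ join_sym).
by rewrite subsetI !subUset !sub1set !inl_apex_tri !inr_apex_tri eqxx w1 w2.
Qed.

Lemma alpha_le_nu : alpha'_ k r <= nu j.
Proof.
apply/bigmax_leqP => F /andP[FE /k_edge_colorableP[c c_proper]].
pose tri E := apex_tri (c E) E.
have tri_inj : {in F &, injective tri}.
  by move=> E1 E2 _ _ /(congr1 base); rewrite !base_apex_tri.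
rewrite -(card_in_imset tri_inj); apply: leq_bigmax_cond; apply/tri_packingP; split.
  move=> _ /imsetP[E EF ->]; apply/join_triangleP.
  by exists (c E), E; rewrite (subsetP FE).
move=> _ _ /imsetP[E1 E1F ->] /imsetP[E2 E2F ->]; apply: contraNT.
move/tri_edges_meetP/(apex_tri_meet _ _ (subsetP FE _ E1F) (subsetP FE _ E2F)).
case=> [-> // | [ceq meet]].
have [-> // | nE] := eqVneq E1 E2.
by have := c_proper _ _ E1F E2F nE meet; rewrite ceq eqxx.
Qed.

Lemma apex_tri_edge a E : is_triangle (edges j) (apex_tri a E) -> E \in edges r.
Proof.
by case/join_triangleP => a' [E' [E'r /(congr1 base)]]; rewrite !base_apex_tri => ->.
Qed.

Section Packing.
Variable P : {set {set W}}.
Hypothesis packP : tri_packing j P.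

Lemma packing_apex_tri t : t \in P -> exists a E, E \in edges r /\ t = apex_tri a E.
Proof. by case/tri_packingP: packP => Ptri _ /Ptri/join_triangleP. Qed.

Lemma packing_apex_uniq a b E : apex_tri a E \in P -> apex_tri b E \in P -> a = b.
Proof.
move=> aP bP; case/tri_packingP: packP => Ptri _.
have Er := apex_tri_edge (Ptri _ aP).
have := tri_packing_meet packP aP bP ((apex_tri_meet a b Er Er).2 (or_introl erefl)).
by move/setP/(_ (inl a)); rewrite !inl_apex_tri eqxx => /esym/eqP.
Qed.

Lemma packing_base_inj : {in P &, injective base}.
Proof.
move=> t1 t2 t1P t2P; have [a1 [E1 [_ et1]]] := packing_apex_tri t1P.
have [a2 [E2 [_ et2]]] := packing_apex_tri t2P; subst t1 t2.
rewrite !base_apex_tri => eE; rewrite eE in t1P *.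
by rewrite (packing_apex_uniq t1P t2P).
Qed.

Lemma packing_colorable : k_edge_colorable k (base @: P).
Proof.
pose c := [ffun E => odflt (Ordinal k_pos) [pick a | apex_tri a E \in P]].
have cE a E : apex_tri a E \in P -> c E = a.
  move=> aP; rewrite ffunE; case: pickP => [b bP | /(_ a)]; last by rewrite aP.
  exact: packing_apex_uniq bP aP.
apply/k_edge_colorableP; exists c => _ _ /imsetP[t1 t1P ->] /imsetP[t2 t2P ->].
have [a1 [E1 [E1r et1]]] := packing_apex_tri t1P.
have [a2 [E2 [E2r et2]]] := packing_apex_tri t2P; subst t1 t2.
rewrite !base_apex_tri (cE _ _ t1P) (cE _ _ t2P) => nE meet.
apply: contraNneq nE => ea.
have meet12 := (apex_tri_meet a1 a2 E1r E2r).2 (or_intror (conj ea meet)).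
by have /(congr1 base) := tri_packing_meet packP t1P t2P meet12; rewrite !base_apex_tri => ->.
Qed.

End Packing.

Lemma nu_le_alpha : nu j <= alpha'_ k r.
Proof.
apply/bigmax_leqP => P packP; rewrite -(card_in_imset (packing_base_inj packP)).
apply: leq_bigmax_cond; rewrite packing_colorable // andbT.
apply/subsetP => _ /imsetP[_ /(packing_apex_tri packP)[a [E [Er ->]]] ->].
by rewrite base_apex_tri.
Qed.

Lemma nu_join : nu j = alpha'_ k r.
Proof. by apply/anti_leq; rewrite nu_le_alpha alpha_le_nu. Qed.

Lemma is_triangle_apex_triD X a E : E \in edges r ->
  is_triangle (edges j :\: X) (apex_tri a E) =
  (inr @: E \notin X) && [forall w in E, [set inl a; inr w] \notin X].
Proof.
move=> /[dup] Er /edgesP[u [v [ruv EE]]].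
have nuv : u != v by apply: contraTneq ruv => ->; rewrite r_irr.
have baseE : inr @: E = [set inr u; inr v] :> {set W} by rewrite EE imsetU1 imset_set1.
have uE : u \in E by rewrite EE set21.
have vE : v \in E by rewrite EE set22.
apply/idP/andP => [triX | [baseX /forall_inP apexX]].
  have edgeX x y : x \in apex_tri a E -> y \in apex_tri a E -> x != y -> [set x; y] \notin X.
    by move=> xt yt nxy; have := is_triangle_edge triX xt yt nxy; rewrite inE => /andP[].
  split; first by rewrite baseE edgeX ?inr_apex_tri.
  by apply/forall_inP => w wE; rewrite edgeX ?inl_apex_tri ?inr_apex_tri.
have tri : is_triangle (edges j) (apex_tri a E) by apply/join_triangleP; exists a, E.
apply: is_triangleD => // x y; rewrite EE apex_tri2.
have apexX' w : w \in E -> [set inr w; inl a] \notin X by rewrite setUC; apply: apexX.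
have baseX' : [set inr v; inr u] \notin X by rewrite setUC -baseE.
by move=> /set3P[]-> /set3P[]->; rewrite ?eqxx // -?baseE ?apexX ?apexX'.
Qed.

Definition join_cover (D : {set T}) : {set {set W}} :=
  [set [set inl p.1; inr p.2] | p in setX [set: 'I_k] (~: D)] :|:
  [set (inr @: E : {set W}) | E : {set T} in induced_edges r D].

Lemma join_cover_sub D : join_cover D \subset edges j.
Proof.
apply/subsetP => _ /setUP[] /imsetP[p pD ->]; first by rewrite (mem_edges2 _ _ join_sym).
move: pD; rewrite inE => /andP[/edgesP[u [v [ruv ->]]] _].
by rewrite imsetU1 imset_set1 (mem_edges2 _ _ join_sym).
Qed.

Lemma card_join_cover D : #|join_cover D| <= k * #|~: D| + #|induced_edges r D|.
Proof.
apply: leq_trans (leq_card_setU _ _) _; apply: leq_add; last exact: leq_imset_card.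
by apply: leq_trans (leq_imset_card _ _) _; rewrite cardsX cardsT card_ord.
Qed.

Lemma join_cover_triangle_free D : triangle_freeE (edges j :\: join_cover D).
Proof.
apply/forallP => t; apply/negP => triX.
have [a [E [Er et]]] : exists a E, E \in edges r /\ t = apex_tri a E.
  by apply/join_triangleP; apply: is_triangleS triX; apply: subsetDl.
move: triX; rewrite et is_triangle_apex_triD // => /andP[baseX /forall_inP apexX].
case/negP: baseX.
rewrite inE; apply/orP; right; apply/imsetP; exists E => //.
rewrite inE Er; apply/subsetP => w wE; apply/negPn/negP => wD.
move: (apexX w wE); rewrite inE negb_or => /andP[apex_w _]; case/negP: apex_w.
by apply/imsetP; exists (a, w); rewrite ?inE.
Qed.

Lemma join_cover_min (X : {set {set W}}) : triangle_freeE (edges j :\: X) ->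
  exists D, k * #|~: D| + #|induced_edges r D| <= #|X|.
Proof.
move=> Xtf.
pose S a := [set w | [set inl a; inr w] \in X].
have [a0 _ a0_min] := @arg_minnP _ (Ordinal k_pos) predT (fun a => #|S a|) isT.
exists (~: S a0); rewrite setCK.
pose apexX := [set [set inl p.1; inr p.2] | p in [set p : 'I_k * T | p.2 \in S p.1]].
pose baseX := [set (inr @: E : {set W}) | E : {set T} in induced_edges r (~: S a0)].
have apexX_sub : apexX \subset X.
  by apply/subsetP => _ /imsetP[p pS ->]; move: pS; rewrite !inE.
have baseX_sub : baseX \subset X.
  apply/subsetP => _ /imsetP[E + ->]; rewrite /induced_edges in_set => /andP[Er ED].
  apply/negPn/negP => baseE.
  move/forallP/(_ (apex_tri a0 E))/negP: Xtf; apply.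
  rewrite is_triangle_apex_triD // baseE; apply/forall_inP => w /(subsetP ED).
  by rewrite !inE.
have apex_base0 : apexX :&: baseX = set0.
  apply/setP => e; rewrite !inE; apply/negP => /andP[/imsetP[p _ ->] /imsetP[E _]].
  by move/setP/(_ (inl p.1)); rewrite !inE eqxx => /esym/imsetP[].
have card_apexX : k * #|S a0| <= #|apexX|.
  have apex_inj : injective (fun p : 'I_k * T => [set inl p.1; inr p.2] : {set W}).
    move=> [a x] [b y] /= e.
    have /set2P[[->] | //] : inl a \in [set inl b; inr y] by rewrite -e set21.
    by have /set2P[// | [->]] : inr x \in [set inl b; inr y] by rewrite -e set22.
  rewrite card_imset // card_dep_pairs -[X in X * _](card_ord k) -sum_nat_const.
  by apply: leq_sum => a _; exact: a0_min.
have card_baseX : #|baseX| = #|induced_edges r (~: S a0)|.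
  by apply: card_imset; apply: imset_inj; exact: inr_inj.
have cover_sub : apexX :|: baseX \subset X by rewrite subUset apexX_sub.
rewrite -card_baseX; apply: leq_trans _ (subset_leq_card cover_sub).
by rewrite cardsU apex_base0 cards0 subn0 leq_add2r.
Qed.

Lemma tau_join_le D : tau j <= k * #|~: D| + #|induced_edges r D|.
Proof.
apply: leq_trans _ (card_join_cover D); rewrite /tau -minEnat -leEnat.
by apply: bigmin_le_cond; rewrite join_cover_sub join_cover_triangle_free.
Qed.

Lemma tau_join_ge : exists D, k * #|~: D| + #|induced_edges r D| <= tau j.
Proof.
pose cover (X : {set {set W}}) := (X \subset edges j) && triangle_freeE (edges j :\: X).
have cover_edges : cover (edges j) by rewrite /cover subxx setDv triangle_freeE0.
have cover_le X : cover X -> (#|X| <= #|edges j|)%O.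
  by case/andP => XE _; rewrite leEnat subset_leq_card.
have [X /andP[_ Xtf] tauE] := eq_bigmin _ _ (fun X : {set {set W}} => #|X|) cover_edges cover_le.
by rewrite /tau -minEnat tauE; exact: join_cover_min.
Qed.

Lemma tau_join : Posz (tau j) = (Posz (k * #|T|) - phi_ k r)%R.
Proof.
apply/eqP; rewrite eq_le; apply/andP; split.
  rewrite lerBrDr -lerBrDl; apply: bigmax_le => [|D _].
    have := tau_join_le set0; rewrite setC0 cardsT induced_edges0 cards0 addn0.
    by rewrite subr_ge0 lez_nat.
  by rewrite phi_setE lerB // lez_nat tau_join_le.
have [D costD] := tau_join_ge.
apply: le_trans (_ : _ <= Posz (k * #|~: D| + #|induced_edges r D|))%R _.
  by rewrite lerBlDl -lerBlDr -phi_setE; exact: le_bigmax.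
by rewrite lez_nat.
Qed.

End Join.

Theorem mainTheorem7 (T : finType) (r : rel T) (k : nat)
  (r_sym : symmetric r) (r_irr : irreflexive r)
  (H_tf : triangle_freeE (edges r)) (k_pos : 0 < k) :
  nu (join_Ik k r) = alpha'_ k r /\
  Posz (tau (join_Ik k r)) = (Posz (k * #|T|) - phi_ k r)%R.
Proof. by split; [exact: nu_join | exact: tau_join]. Qed.
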